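(* Let $d\ge 1$, let $\mathcal{O}=\{u_1,\dots,u_k\}$ be a set of $k\ge 1$ distinct unit vectors in $\mathbb{R}^d$, and let $\mathcal{C}_{\mathcal{O}}$ be the family of convex polyhedra defined by $\mathcal{O}$. Let $P\subset\mathbb{R}^d$ be a finite set of $n\ge 1$ points. Then there exists a point $p\in P$ such that $p\in C$ for every $C\in\mathcal{C}_{\mathcal{O}}$ with $|C\cap P|>(1-\frac{1}{k})n$.
   Context: For a unit vector $u\in\mathbb{R}^d$ and $t\in\mathbb{R}$, the closed halfspace $\{x\in\mathbb{R}^d:\langle u,x\rangle\le t\}$ is said to have orientation (outward normal) $u$. The family of convex polyhedra defined by $\mathcal{O}$, denoted $\mathcal{C}_{\mathcal{O}}$, is the family of all sets of the form $H_1\cap\dots\cap H_m$ ($m\ge 0$ finite; the empty intersection is $\mathbb{R}^d$), where each $H_j$ is a closed halfspace whose orientation belongs to $\mathcal{O}$. *)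

(* R^d is rendered as row vectors 'rV[R]_d over an arbitrary
   real field R (the statement is purely order-algebraic). *)
From HB Require Import structures.
From mathcomp Require Import all_boot all_order all_algebra.
Set Implicit Arguments. Unset Strict Implicit. Unset Printing Implicit Defensive.
Import Order.TTheory GRing.Theory Num.Theory.
Local Open Scope ring_scope.

Definition dotp (R : realFieldType) (d : nat) (u x : 'rV[R]_d) : R :=
  \sum_(i < d) u 0 i * x 0 i.

Definition unit_vec (R : realFieldType) (d : nat) (u : 'rV[R]_d) : Prop :=
  dotp u u = 1.

Definition halfspace (R : realFieldType) (d : nat) (u : 'rV[R]_d) (t : R)
  : pred 'rV[R]_d := fun x => dotp u x <= t.

Definition in_family (R : realFieldType) (d : nat) (O : seq 'rV[R]_d)
  (C : pred 'rV[R]_d) : Prop :=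
  exists hs : seq ('rV[R]_d * R),
    (forall h, h \in hs -> h.1 \in O) /\
    (forall x, C x = all (fun h => halfspace h.1 h.2 x) hs).

From HB Require Import structures.
From mathcomp Require Import all_boot all_order all_algebra.
From mathcomp Require Import lra.
Set Implicit Arguments. Unset Strict Implicit. Unset Printing Implicit Defensive.
Import Order.TTheory GRing.Theory Num.Theory.
Local Open Scope ring_scope.

(* Put k = |O| and n = |P|.  For a direction u, call a
   point p of P "u-shallow" when fewer than n/k points q of P satisfy
   <u,p> <= <u,q>.  All u-shallow points lie at least as far along u as the
   u-shallow point minimising <u,.>, so there are fewer than n/k of them.
   By the union bound over the k directions of O, fewer than n points of P
   are shallow in some direction, so some p in P is shallow in no direction.  This p works: if a
   polyhedron C of the family misses p, one of its halfspaces {<u,x> <= t}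
   misses p, and then it misses every q with <u,p> <= <u,q>; as C holds more
   than (1 - 1/k) n points, fewer than n/k points lie outside C, so p would be
   u-shallow. *)

Lemma count_has_le (T : Type) (U : eqType) (a : U -> pred T) (s : seq U)
    (P : seq T) (m : nat) :
  (forall u, u \in s -> count (a u) P <= m)%N ->
  (count (fun x => has (a ^~ x) s) P <= size s * m)%N.
Proof.
elim: s => [|u s IH] a_le /=.
  by rewrite (eq_count (a2 := pred0)) // count_pred0.
have le_u := a_le u (mem_head u s).
have le_s := IH (fun v vs => a_le v (mem_behead (s := u :: s) vs)).
rewrite mulSn; apply: leq_trans (leq_add le_u le_s).
rewrite -(count_predUI (a u) (fun x => has (a ^~ x) s)).
exact: leq_addr.
Qed.

Lemma seq_argmin {R : realDomainType} {T : eqType} (f : T -> R) (x0 : T)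
    (s : seq T) :
  exists2 m, m \in x0 :: s & forall y, y \in x0 :: s -> f m <= f y.
Proof.
elim: s x0 => [|x s IH] x0.
  by exists x0 => [|y]; rewrite ?mem_head // inE => /eqP ->.
have [m ms m_min] := IH x.
have [le_x0m|lt_mx0] := leP (f x0) (f m).
  exists x0 => [|y]; first exact: mem_head.
  by rewrite inE => /orP [/eqP ->//|/m_min]; apply: le_trans.
exists m => [|y]; first by rewrite inE ms orbT.
by rewrite inE => /orP [/eqP ->|/m_min//]; apply: ltW.
Qed.

Section ShallowPoints.
Variables (R : realDomainType) (T : eqType) (f : T -> R) (P : seq T) (k : nat).

Definition shallow (p : T) : bool :=
  (k * count (fun q => (f p <= f q)%R) P < size P)%N.

(* The shallow points all weigh at least as much as the lightest shallow
   point, which is itself shallow; hence there are fewer than |P|/k of them. *)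
Lemma few_shallow : (0 < size P)%N -> (k * count shallow P < size P)%N.
Proof.
move=> P_gt0.
case def_S: (filter shallow P) => [|x0 s].
  by move: (size_filter shallow P); rewrite def_S => <-; rewrite muln0.
have [m mS m_min] := seq_argmin f x0 s.
rewrite -def_S mem_filter in mS; case/andP: mS => m_shallow _.
apply: leq_ltn_trans m_shallow; rewrite leq_mul2l; apply/orP; right.
rewrite (@eq_in_count _ _ (predI shallow (mem P))); last first.
  by move=> q qP /=; rewrite qP andbT.
apply: sub_count => q qS; apply: m_min.
by rewrite -def_S mem_filter.
Qed.

End ShallowPoints.

(* Separation in C_O: a polyhedron of the family that misses p has a
   direction u in O such that it misses every point at least as far along u
   as p (namely the normal of a defining halfspace violated by p). *)
Lemma in_family_separation (R : realFieldType) (d : nat) (O : seq 'rV[R]_d)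
    (C : pred 'rV[R]_d) (p : 'rV[R]_d) :
  in_family O C -> ~~ C p ->
  exists2 u, u \in O & forall q, dotp u p <= dotp u q -> ~~ C q.
Proof.
case=> hs [hsO defC]; rewrite defC => /allPn [h h_hs p_out].
exists h.1 => [|q le_pq]; first exact: hsO.
rewrite defC; apply/allPn; exists h => //.
by rewrite /halfspace -ltNge (lt_le_trans _ le_pq) // ltNge.
Qed.

Lemma few_outside (R : realFieldType) (T : Type) (C : pred T) (P : seq T)
    (k : nat) :
  (0 < k)%N ->
  (1 - k%:R^-1) * (size P)%:R < (count C P)%:R :> R ->
  (k * count (predC C) P < size P)%N.
Proof.
move=> k_gt0 many_in.
rewrite -(count_predC C P) natrD in many_in *.
rewrite -(ltr_nat R) natrM natrD.
have k_pos : 0 < k%:R :> R by rewrite ltr0n.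
have k_inv : k%:R * (1 - k%:R^-1) = k%:R - 1 :> R.
  by rewrite mulrBr mulr1 mulfV // gt_eqF.
rewrite -(ltr_pM2l k_pos) mulrA k_inv in many_in.
nra.
Qed.

Theorem theorem1 (R : realFieldType) (d : nat) (O : seq 'rV[R]_d)
    (P : seq 'rV[R]_d) :
  (1 <= d)%N ->
  uniq O -> (1 <= size O)%N -> (forall u, u \in O -> unit_vec u) ->
  uniq P -> (1 <= size P)%N ->
  exists p, p \in P /\
    forall C : pred 'rV[R]_d, in_family O C ->
      (1 - (size O)%:R^-1) * (size P)%:R < (count C P)%:R :> R -> C p.
Proof.
move=> _ _ k_gt0 _ _ n_gt0.
pose shallow_in u := shallow (dotp u) P (size O).
pose shallow_somewhere p := has (shallow_in ^~ p) O.
have few_shallow_somewhere : (count shallow_somewhere P < size P)%N.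
  have few_u u : u \in O -> (count (shallow_in u) P <= (size P).-1 %/ size O)%N.
    move=> _; rewrite leq_divRL // mulnC -ltnS prednK //.
    exact: few_shallow.
  apply: leq_ltn_trans (count_has_le few_u) _.
  by rewrite mulnC (leq_ltn_trans (leq_divM _ _)) // prednK.
have /hasP [p pP p_deep] : has (predC shallow_somewhere) P.
  by rewrite has_count -(ltn_add2l (count shallow_somewhere P)) addn0 count_predC.
exists p; split=> // C C_fam many_in; apply: contraNT p_deep => p_out.
have [u uO u_sep] := in_family_separation C_fam p_out.
apply/hasP; exists u => //.
apply: leq_ltn_trans (few_outside k_gt0 many_in); rewrite leq_mul2l.
by apply/orP; right; apply: sub_count => q /u_sep.
Qed.
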